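(* Let $G$ be a finitely generated, residually finite group. For a finitely generated group $H$ let $\operatorname{rk}(H)$ denote the minimal number of elements generating $H$ (every subgroup of finite index in $G$ is finitely generated). Suppose that the function $\varphi = \operatorname{rk} - 1$, defined on the subgroups of finite index in $G$, is multiplicative, i.e. for all subgroups $G_2 \leq G_1 \leq G$ with $G_2$ of finite index in $G$ one has \[ \operatorname{rk}(G_2) - 1 = [G_1 : G_2]\cdot\big(\operatorname{rk}(G_1) - 1\big). \] Then $G$ is a free group.
   Context: The rank $\operatorname{rk}(H)$ of a finitely generated group $H$ is the minimal cardinality of a generating set of $H$. A real-valued function $\varphi$ on the subgroups of finite index of $G$ is called multiplicative if $\varphi(G_2) = [G_1:G_2]\cdot \varphi(G_1)$ for all pairs of subgroups $G_2 \leq G_1$ of $G$ with $G_2$ of finite index in $G$. *)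

(* Abstract, possibly infinite groups are
   encoded as a carrier type with explicit operations and group axioms. *)
From mathcomp Require Import all_boot all_algebra.
Set Implicit Arguments. Unset Strict Implicit. Unset Printing Implicit Defensive.

Record group_struct (T : Type) := GroupStruct {
  gmul : T -> T -> T;
  gone : T;
  ginv : T -> T;
  gmulA : forall x y z, gmul x (gmul y z) = gmul (gmul x y) z;
  gmul1 : forall x, gmul gone x = x;
  gmulV : forall x, gmul (ginv x) x = gone }.

Section Defs.
Variables (T : Type) (G : group_struct T).

Definition is_subgroup (S : T -> Prop) : Prop :=
  S (gone G) /\ (forall x y, S x -> S y -> S (gmul G x y)) /\
  (forall x, S x -> S (ginv G x)).

Definition is_normal (N : T -> Prop) : Prop :=
  forall x y, N x -> N (gmul G (ginv G y) (gmul G x y)).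

Definition prop_subset (A B : T -> Prop) : Prop := forall x, A x -> B x.

Definition has_index (G1 G2 : T -> Prop) (n : nat) : Prop :=
  exists r : 'I_n -> T, (forall i, G1 (r i)) /\
    forall x, G1 x -> exists! i, G2 (gmul G (ginv G (r i)) x).

Definition finite_index (H : T -> Prop) : Prop :=
  exists n, has_index (fun _ => True) H n.

Definition in_gen (S : T -> Prop) (x : T) : Prop :=
  forall K, is_subgroup K -> prop_subset S K -> K x.

Definition generates (H : T -> Prop) (k : nat) (g : 'I_k -> T) : Prop :=
  (forall i, H (g i)) /\ forall x, H x -> in_gen (fun y => exists i, y = g i) x.

Definition is_rank (H : T -> Prop) (r : nat) : Prop :=
  (exists g : 'I_r -> T, generates H g) /\
  forall k (g : 'I_k -> T), generates H g -> (r <= k)%N.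

Definition fin_generated : Prop :=
  exists k (g : 'I_k -> T), generates (fun _ => True) g.

Definition residually_finite : Prop :=
  forall x, x <> gone G -> exists N, is_subgroup N /\ is_normal N /\
    finite_index N /\ ~ N x.

End Defs.

Definition is_hom (T U : Type) (G : group_struct T) (H : group_struct U)
  (f : T -> U) : Prop := forall x y, f (gmul G x y) = gmul H (f x) (f y).

Definition is_free (T : Type) (G : group_struct T) : Prop :=
  exists X : T -> Prop, forall (U : Type) (H : group_struct U) (f : T -> U),
    exists phi : T -> U, is_hom G H phi /\ (forall x, X x -> phi x = f x) /\
      forall psi : T -> U, is_hom G H psi -> (forall x, X x -> psi x = f x) ->
        forall y, psi y = phi y.

From mathcomp Require Import all_boot all_algebra zify.
From Stdlib Require Import ClassicalEpsilon Classical Wf_nat.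
Set Implicit Arguments. Unset Strict Implicit. Unset Printing Implicit Defensive.
Import GRing.Theory.

(* Let g be a generating family of minimal size d = rk G.  It suffices to show
   that no nonempty reduced word in g is trivial in G.  The suffixes of a
   shortest such relator w represent pairwise distinct elements, so residual
   finiteness yields a subgroup K of finite index n whose cosets separate them.
   In the coset graph of K the relator then traces a closed walk through |w|
   distinct cosets along |w| distinct edges; extending this cycle to a connected
   spanning subgraph gives a transversal for which at least n of the n d
   Schreier generators of K are trivial.  Hence rk K <= n (d - 1), contradicting
   rk K - 1 = n (d - 1). *)

Lemma ex_minimal_nat (P : nat -> Prop) :
  (exists k, P k) -> exists k, P k /\ forall m, P m -> k <= m.
Proof.
move=> exP.
have [k [[Pk k_min] _]] :=
  @dec_inh_nat_subset_has_unique_least_element P (fun m => classic (P m)) exP.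
by exists k; split=> // m /k_min/leP.
Qed.

Section GroupTheory.
Variables (T : Type) (G : group_struct T).
Local Notation "x ** y" := (gmul G x y) (at level 40, left associativity).
Local Notation e := (gone G).
Local Notation "x ^-1" := (ginv G x).

Lemma gmulgV x : x ** x^-1 = e.
Proof.
rewrite -[x ** _](gmul1 G) -(gmulV G x^-1) -!gmulA [x^-1 ** _]gmulA.
by rewrite gmulV gmul1.
Qed.

Lemma gmulg1 x : x ** e = x.
Proof. by rewrite -(gmulV G x) gmulA gmulgV gmul1. Qed.

Lemma gmulKg x y : x^-1 ** (x ** y) = y.
Proof. by rewrite gmulA gmulV gmul1. Qed.

Lemma gmulKVg x y : x ** (x^-1 ** y) = y.
Proof. by rewrite gmulA gmulgV gmul1. Qed.

Lemma gmulgK x y : y ** x ** x^-1 = y.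
Proof. by rewrite -gmulA gmulgV gmulg1. Qed.

Lemma ginv_uniq x y : x ** y = e -> x = y^-1.
Proof. by move=> xy; rewrite -[x]gmulg1 -(gmulgV y) gmulA xy gmul1. Qed.

Lemma ginvK x : (x^-1)^-1 = x.
Proof. by symmetry; apply: ginv_uniq; rewrite gmulgV. Qed.

Lemma ginvM x y : (x ** y)^-1 = y^-1 ** x^-1.
Proof. by symmetry; apply: ginv_uniq; rewrite -gmulA gmulKg gmulV. Qed.

Lemma ginv1 : e^-1 = e.
Proof. by symmetry; apply: ginv_uniq; rewrite gmul1. Qed.

Lemma gmul_idl x y : x ** y = y -> x = e.
Proof. by move=> xy; rewrite -(gmulgK y x) xy gmulgV. Qed.

Lemma in_gen_subgroup (S : T -> Prop) : is_subgroup G (in_gen G S).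
Proof.
split; [|split].
- by move=> K [].
- move=> x y Sx Sy K sK SK; case: (sK) => _ [KM _].
  by apply: KM; [apply: Sx | apply: Sy].
- by move=> x Sx K sK SK; case: (sK) => _ [_ KV]; apply: KV; apply: Sx.
Qed.

Lemma mem_in_gen (S : T -> Prop) x : S x -> in_gen G S x.
Proof. by move=> Sx K _ SK; apply: SK. Qed.

Lemma is_rank_exists (H : T -> Prop) k (f : 'I_k -> T) :
  generates G H f -> exists2 r, is_rank G H r & r <= k.
Proof.
move=> genf.
pose gen_size m := exists f' : 'I_m -> T, generates G H f'.
have [r [[f' genf'] r_min]] := ex_minimal_nat (ex_intro gen_size k (ex_intro _ f genf)).
exists r; last by apply: r_min; exists f.
by split=> [|m f'' genf'']; [exists f' | apply: r_min; exists f''].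
Qed.

Lemma generates_drop_trivial (I : finType) (s : I -> T) (S : {set I}) (H : T -> Prop) :
  (forall i, H (s i)) -> (forall x, H x -> in_gen G (fun y => exists i, y = s i) x) ->
  (forall i, i \in S -> s i = e) ->
  generates G H (fun j : 'I_#|~: S| => s (enum_val j)).
Proof.
move=> Hs s_spans s_triv; split=> // x /s_spans Sx M sM sub; apply: Sx => // _ [i ->].
have [iS | iS] := boolP (i \in S); first by rewrite s_triv //; case: sM.
have iC : i \in ~: S by rewrite inE.
by apply: sub; exists (enum_rank_in iC i); rewrite enum_rankK_in.
Qed.

End GroupTheory.

Section Homomorphisms.
Variables (T U : Type) (G : group_struct T) (H : group_struct U) (f : T -> U).
Hypothesis f_hom : is_hom G H f.

Lemma hom_one : f (gone G) = gone H.
Proof. by apply: (@gmul_idl _ H _ (f (gone G))); rewrite -f_hom gmul1. Qed.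

Lemma hom_inv x : f (ginv G x) = ginv H (f x).
Proof. by apply: ginv_uniq; rewrite -f_hom gmulV hom_one. Qed.

End Homomorphisms.

(** * Words in a generating family *)

Definition signed (T : Type) (G : group_struct T) (b : bool) (x : T) :=
  if b then x else ginv G x.

Section Words.
Variable d : nat.

Definition letter := ('I_d * bool)%type.

Definition weval (U : Type) (H : group_struct U) (h : 'I_d -> U) (w : seq letter) : U :=
  foldr (fun l acc => gmul H (signed H l.2 (h l.1)) acc) (gone H) w.

Definition cancels (x y : letter) := (x.1 == y.1) && (x.2 != y.2).

Fixpoint reduced (w : seq letter) : bool :=
  if w is x :: ((y :: _) as w') then ~~ cancels x y && reduced w' else true.

Definition winv (w : seq letter) : seq letter := rev (map (fun l => (l.1, ~~ l.2)) w).

Variables (U : Type) (H : group_struct U) (h : 'I_d -> U).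

Lemma weval_cat u v : weval H h (u ++ v) = gmul H (weval H h u) (weval H h v).
Proof. by elim: u => [|x u IH] /=; rewrite ?gmul1 // IH gmulA. Qed.

Lemma signed_cancel x y : cancels x y ->
  gmul H (signed H x.2 (h x.1)) (signed H y.2 (h y.1)) = gone H.
Proof.
case: x y => [a b] [a' b'] /andP [/= /eqP <-].
by case: b; case: b' => //= _; rewrite ?gmulgV ?gmulV.
Qed.

Lemma weval_reduce u x y v : cancels x y ->
  weval H h (u ++ x :: y :: v) = weval H h (u ++ v).
Proof.
move=> xy; rewrite !weval_cat /=; congr (gmul H _ _).
by rewrite gmulA signed_cancel // gmul1.
Qed.

Lemma weval_winv w : weval H h (winv w) = ginv H (weval H h w).
Proof.
elim: w => [|x w IH] /=; first by rewrite ginv1.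
rewrite /winv /= rev_cons -cats1 weval_cat -/(winv w) IH /= gmulg1 ginvM /signed.
by case: x.2; rewrite ?ginvK.
Qed.

Lemma weval_infix_one j k w : j <= k <= size w ->
  weval H h (drop j w) = weval H h (drop k w) ->
  weval H h (take (k - j) (drop j w)) = gone H.
Proof.
case/andP=> jk kw.
rewrite -{1}(cat_take_drop (k - j) (drop j w)) drop_drop subnK // weval_cat.
exact: gmul_idl.
Qed.

Lemma weval_hom (T : Type) (G : group_struct T) (g : 'I_d -> T) (f : T -> U) :
  is_hom G H f -> (forall i, f (g i) = h i) -> forall w, f (weval G g w) = weval H h w.
Proof.
move=> f_hom fg; elim=> [|[a b] w IH] /=; first exact: hom_one.
by rewrite f_hom IH -fg; case: b; rewrite //= (hom_inv f_hom).
Qed.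

Lemma reduced_cat u v : reduced (u ++ v) -> reduced u /\ reduced v.
Proof.
elim: u => [|x u IH] //=; case: u IH => [_ | y u IH] /=.
  by case: v => [|z v] //= /andP [_ ->].
by case/andP=> xy /IH [yu ->]; rewrite xy.
Qed.

Lemma reduced_take m w : reduced w -> reduced (take m w).
Proof. by rewrite -{1}(cat_take_drop m w) => /reduced_cat[]. Qed.

Lemma reduced_drop m w : reduced w -> reduced (drop m w).
Proof. by rewrite -{1}(cat_take_drop m w) => /reduced_cat[]. Qed.

Lemma reduced_nth x0 w m : reduced w -> m.+1 < size w ->
  ~~ cancels (nth x0 w m) (nth x0 w m.+1).
Proof.
elim: w m => [|x w IH] m //=; case: w IH => [|y w] IH //= /andP [xy w_red].
by case: m => [|m] //= /(IH m w_red).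
Qed.

Lemma not_reduced_cancels w : ~~ reduced w ->
  exists u x y v, w = u ++ x :: y :: v /\ cancels x y.
Proof.
elim: w => [|x w IH] //=; case: w IH => [|y w] IH //.
rewrite negb_and negbK => /orP [xy | /IH [u [x' [y' [v [-> xy']]]]]].
  by exists [::], x, y, w.
by exists (x :: u), x', y', v.
Qed.

End Words.

(** * Subgroups of finite index *)

Section Subgroups.
Variables (T : Type) (G : group_struct T).
Local Notation "x ** y" := (gmul G x y) (at level 40, left associativity).
Local Notation e := (gone G).
Local Notation "x ^-1" := (ginv G x).

Definition classifies (K : T -> Prop) (F : Type) (c : T -> F) :=
  forall x y, c x = c y <-> K (x^-1 ** y).

Lemma classifies_mull K F (c : T -> F) y a b :
  classifies K c -> c a = c b -> c (y ** a) = c (y ** b).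
Proof. by move=> hc /hc ab; apply/hc; rewrite ginvM -gmulA gmulKg. Qed.

Lemma finite_index_classifier K n : is_subgroup G K -> has_index G (fun _ => True) K n ->
  exists c : T -> 'I_n, classifies K c /\ forall i, exists x, c x = i.
Proof.
move=> [K1 [KM KV]] [r [_ r_reps]].
have [i0 _] := r_reps e I.
pose c x := epsilon (inhabits i0) (fun i => K ((r i)^-1 ** x)).
have cP x : K ((r (c x))^-1 ** x).
  apply: (epsilon_spec (inhabits i0) (fun i => K ((r i)^-1 ** x))).
  by have [i [Ki _]] := r_reps x I; exists i.
have c_uniq x i : K ((r i)^-1 ** x) -> i = c x.
  move=> Ki; have [j [_ j_uniq]] := r_reps x I.
  by rewrite -(j_uniq _ Ki) (j_uniq _ (cP x)).
exists c; split=> [x y | i]; last by exists (r i); apply/esym/c_uniq; rewrite gmulV.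
split=> [cxy | Kxy].
- by have := KM _ _ (KV _ (cP x)) (cP y); rewrite cxy ginvM ginvK gmulA gmulgK.
- by apply: c_uniq; have := KM _ _ (cP x) Kxy; rewrite -gmulA gmulKVg.
Qed.

Lemma classifier_finite_index K (F : finType) (c : T -> F) :
  classifies K c -> finite_index G K.
Proof.
move=> hc; pose rep i := epsilon (inhabits e) (fun x => c x = i).
pose hit : {set F} := [set i | c (rep i) == i].
have c_hit x : c x \in hit.
  rewrite inE; apply/eqP.
  by apply: (epsilon_spec (inhabits e) (fun y => c y = c x)); exists x.
exists #|hit|, (fun k => rep (enum_val k)); split=> // x _.
exists (enum_rank_in (c_hit x) (c x)); split.
- by apply/hc; rewrite enum_rankK_in //; move: (c_hit x); rewrite inE => /eqP.
- move=> k /hc; move: (enum_valP k); rewrite inE => /eqP -> cx.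
  by apply: enum_val_inj; rewrite enum_rankK_in.
Qed.

Lemma subgroupI K N : is_subgroup G K -> is_subgroup G N ->
  is_subgroup G (fun x => K x /\ N x).
Proof.
move=> [K1 [KM KV]] [N1 [NM NV]]; split; [by [] | split].
- by move=> x y [Kx Nx] [Ky Ny]; split; [apply: KM | apply: NM].
- by move=> x [Kx Nx]; split; [apply: KV | apply: NV].
Qed.

Lemma finite_indexI K N : is_subgroup G K -> is_subgroup G N ->
  finite_index G K -> finite_index G N -> finite_index G (fun x => K x /\ N x).
Proof.
move=> sK sN [m hm] [n hn].
have [cK [hcK _]] := finite_index_classifier sK hm.
have [cN [hcN _]] := finite_index_classifier sN hn.
apply: (@classifier_finite_index _ _ (fun x => (cK x, cN x))) => x y.
by split=> [[/hcK ? /hcN ?] | [/hcK -> /hcN ->]].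
Qed.

Lemma residually_finite_avoid (I : finType) (P : pred I) (f : I -> T) :
  residually_finite G -> (forall i, P i -> f i <> e) ->
  exists K, [/\ is_subgroup G K, finite_index G K & forall i, P i -> ~ K (f i)].
Proof.
move=> rf f_nt.
suff [K [sK fK avoid]] : exists K, [/\ is_subgroup G K, finite_index G K &
    forall i, i \in enum I -> P i -> ~ K (f i)].
  by exists K; split=> // i; apply: avoid; rewrite mem_enum.
elim: (enum I) => [|i s [K [sK fK avoid]]].
  exists (fun _ => True); split=> //.
  by apply: (classifier_finite_index (c := fun _ => tt)).
have [Pi | nPi] := boolP (P i); last first.
  by exists K; split=> // j; rewrite inE => /predU1P [-> /(negP nPi) | /avoid].
have [N [sN [_ [fN Nfi]]]] := rf (f i) (f_nt i Pi).
exists (fun x => K x /\ N x); split; [exact: subgroupI | exact: finite_indexI |].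
move=> j; rewrite inE => /predU1P [-> _ [] // | js Pj [Kj _]].
exact: avoid js Pj Kj.
Qed.

End Subgroups.

(** * Schreier generators and the coset graph *)

Section CosetGraph.
Variables (T : Type) (G : group_struct T).
Local Notation "x ** y" := (gmul G x y) (at level 40, left associativity).
Local Notation e := (gone G).
Local Notation "x ^-1" := (ginv G x).

Variables (K : T -> Prop) (n : nat) (c : T -> 'I_n).
Hypothesis hc : classifies G K c.
Variables (d : nat) (g : 'I_d -> T).
Hypothesis g_spans : forall x, in_gen G (fun y => exists i, y = g i) x.

Section Schreier.
Variable t : 'I_n -> T.
Hypotheses (ct : forall i, c (t i) = i) (t_root : t (c e) = e).

Definition schreier_gen (q : 'I_n * 'I_d) :=
  (t (c (g q.2 ** t q.1)))^-1 ** (g q.2 ** t q.1).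

Lemma schreier_genK q : K (schreier_gen q).
Proof. by apply/hc; rewrite ct. Qed.

Lemma schreier_generation x : is_subgroup G K -> K x ->
  in_gen G (fun y => exists q, y = schreier_gen q) x.
Proof.
move=> [_ [_ KV]] Kx.
set S := in_gen G _.
have [S1 [SM SV]] := in_gen_subgroup G (fun y => exists q, y = schreier_gen q).
pose P y := forall i, S ((t (c (y ** t i)))^-1 ** (y ** t i)).
have sP : is_subgroup G P.
  split; [|split].
  - by move=> i; rewrite gmul1 ct gmulV.
  - move=> y z Py Pz i; set j := c (z ** t i).
    have -> : c (y ** z ** t i) = c (y ** t j).
      by rewrite -gmulA; apply: classifies_mull hc _; rewrite ct.
    by have := SM _ _ (Py j) (Pz i); rewrite -!gmulA gmulKVg.
  - move=> y Py i; set j := c (y^-1 ** t i).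
    have yj : c (y ** t j) = i.
      by rewrite -[RHS]ct -[t i](gmulKVg G y); apply: classifies_mull hc _; rewrite ct.
    by have := SV _ (Py j); rewrite yj ginvM ginvK ginvM -!gmulA.
have /(_ (c e)) : P x.
  by apply: (g_spans x) => // _ [a ->] i; apply: mem_in_gen; exists (i, a).
rewrite t_root gmulg1 (_ : c x = c e); last by apply/hc; rewrite gmulg1; apply: KV.
by rewrite t_root ginv1 gmul1.
Qed.

End Schreier.

(* An edge (i, a) goes from the coset i to the coset of g a ** t i.  Every edge
   in E has a trivial Schreier generator, and E has at least one edge more than a
   spanning tree of the cosets in R would need. *)
Record partial_transversal (R : {set 'I_n}) (t : 'I_n -> T) (E : {set 'I_n * 'I_d}) : Prop :=
  PartialTransversal {
    transversal_coset : forall i, i \in R -> c (t i) = i;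
    transversal_root : c e \in R;
    transversal_root_rep : t (c e) = e;
    transversal_edges : forall q, q \in E ->
      [/\ q.1 \in R, c (g q.2 ** t q.1) \in R & t (c (g q.2 ** t q.1)) = g q.2 ** t q.1];
    transversal_edge_count : #|R| <= #|E| }.

Section Growth.
Hypothesis c_surj : forall i, exists x, c x = i.

Lemma coset_graph_connected (R : {set 'I_n}) : c e \in R ->
  (forall z a b, c z \in R -> c (signed G b (g a) ** z) \in R) -> forall i, i \in R.
Proof.
move=> root closed i.
pose P y := forall z, (c z \in R) = (c (y ** z) \in R).
have sP : is_subgroup G P.
  split; [|split].
  - by move=> z; rewrite gmul1.
  - by move=> y z Py Pz w; rewrite Pz Py gmulA.
  - by move=> y Py z; rewrite (Py (y^-1 ** z)) gmulKVg.
have [x <-] := c_surj i.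
have /(_ e) : P x.
  apply: (g_spans x) => // _ [a ->] z; apply/idP/idP; first exact: (closed z a true).
  by move/(closed _ a false); rewrite /= gmulKg.
by rewrite gmulg1 root.
Qed.

Lemma transversal_exit R t E : partial_transversal R t E -> (exists j, j \notin R) ->
  exists i a b, i \in R /\ c (signed G b (g a) ** t i) \notin R.
Proof.
move=> [ct root _ _ _] [j /negP jR]; apply: NNPP => no_exit; apply: jR.
apply: coset_graph_connected root _ j => z a b zR.
rewrite -(classifies_mull _ hc (ct _ zR)); apply/negPn/negP => out.
by apply: no_exit; exists (c z), a, b.
Qed.

Lemma partial_transversal_grow R t E : partial_transversal R t E -> (exists j, j \notin R) ->
  exists R' t' E', partial_transversal R' t' E' /\ #|R| < #|R'|.
Proof.
move=> tr /(transversal_exit tr) [i [a [b [iR jR]]]].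
case: tr => ct root root_rep edges count.
set y := signed G b (g a) ** t i in jR; set j := c y in jR.
pose t' k := if k == j then y else t k.
have t'R k : k \in R -> t' k = t k.
  by move=> kR; rewrite /t'; case: eqP => // kj; rewrite -kj kR in jR.
(* g a maps t i to y if b, and y to t i otherwise *)
pose q := if b then (i, a) else (j, a).
have qE : q \notin E.
  apply/negP => /edges [q1 q2 _]; move: q1 q2; rewrite /q; case hb: b => /= q1 q2.
  - by rewrite /j /y hb q2 in jR.
  - by rewrite q1 in jR.
exists (j |: R), t', (q |: E); split; last by rewrite cardsU1 jR.
split.
- move=> k; rewrite in_setU1 => /predU1P [-> | kR]; first by rewrite /t' eqxx.
  by rewrite t'R // ct.
- by rewrite in_setU1 root orbT.
- by rewrite t'R.
- move=> p; rewrite in_setU1 => /predU1P [-> | pE]; last first.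
    by have [p1 p2 p3] := edges p pE; rewrite !in_setU1 t'R // p1 p2 !orbT t'R.
  rewrite /q; case hb: b => /=.
  - have gy : g a ** t' i = y by rewrite t'R // /y hb.
    by rewrite gy -/j /t' eqxx !in_setU1 iR eqxx !orbT.
  - have gy : g a ** t' j = t i by rewrite /t' eqxx /y hb gmulKVg.
    by rewrite gy ct // t'R // !in_setU1 iR eqxx !orbT.
- by rewrite !cardsU1 jR qE leq_add2l.
Qed.

Lemma full_transversal R t E : partial_transversal R t E ->
  exists t' E', partial_transversal setT t' E'.
Proof.
have [m] := ubnP (n - #|R|); elim: m R t E => // m IH R t E; rewrite ltnS => hm tr.
have [[j jR] | full] := classic (exists j, j \notin R).
  have [R' [t' [E' [tr' ltR]]]] := partial_transversal_grow tr (ex_intro _ j jR).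
  have R'n : #|R'| <= n by rewrite -[X in _ <= X]card_ord max_card.
  by apply: IH tr'; lia.
suff RT : R = setT by rewrite RT in tr; exists t, E.
by apply/setP => k; rewrite inE; apply/negPn/negP => kR; apply: full; exists k.
Qed.

End Growth.
End CosetGraph.

(** * Relators *)

Section Relators.
Variables (T : Type) (G : group_struct T).
Local Notation "x ** y" := (gmul G x y) (at level 40, left associativity).
Local Notation e := (gone G).
Local Notation "x ^-1" := (ginv G x).
Variables (d : nat) (g : 'I_d -> T).
Hypothesis g_spans : forall x, in_gen G (fun y => exists i, y = g i) x.

Section Loop.
Variables (K : T -> Prop) (n : nat) (c : T -> 'I_n).
Hypothesis hc : classifies G K c.
Variables (w : seq (letter d)) (x0 : letter d).
Hypotheses (w_nil : w != [::]) (w_reduced : reduced w) (w_rel : weval G g w = e).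
Let L := size w.
Let p k := weval G g (drop k w).
Hypothesis cosets_distinct : forall j k, j < k < L -> c (p j) <> c (p k).

Lemma suffix0 : p 0 = e. Proof. by rewrite /p drop0. Qed.
Lemma suffix_size : p L = e. Proof. by rewrite /p drop_size. Qed.

(* With b read as 0 or 1, the letter (a, b) at position k is an a-labelled edge
   from the k + b-th to the k + ~~ b-th suffix. *)
Lemma loop_step k a b : k < L -> nth x0 w k = (a, b) -> g a ** p (k + b) = p (k + ~~ b).
Proof.
move=> hk wk; have : p k = signed G b (g a) ** p k.+1 by rewrite /p (drop_nth x0 hk) wk.
by case: b {wk} => /= pk; rewrite ?addn0 ?addn1 pk ?gmulKVg.
Qed.

Lemma coset_suffix_inj j k : j < L -> k < L -> c (p j) = c (p k) -> j = k.
Proof.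
move=> hj hk pjk; case: (ltngtP j k) => // [jk | kj]; exfalso.
- by apply: (cosets_distinct _ pjk); rewrite jk.
- by apply: (cosets_distinct _ (esym pjk)); rewrite kj.
Qed.

Lemma coset_suffix_wrap j k : j <= L -> k <= L -> c (p j) = c (p k) ->
  [\/ j = k, j = 0 /\ k = L | j = L /\ k = 0].
Proof.
have L0 : 0 < L by rewrite lt0n size_eq0.
have pL : c (p L) = c (p 0) by rewrite suffix_size suffix0.
rewrite leq_eqVlt => /predU1P [-> | hj]; rewrite leq_eqVlt => /predU1P [-> | hk] pjk.
- by constructor 1.
- by rewrite pL in pjk; rewrite -(coset_suffix_inj L0 hk pjk); constructor 3.
- by rewrite pL in pjk; rewrite (coset_suffix_inj hj L0 pjk); constructor 2.
- by constructor 1; apply: coset_suffix_inj.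
Qed.

Lemma loop_no_reversal (k1 k2 : 'I_L) a :
  nth x0 w k1 = (a, true) -> nth x0 w k2 = (a, false) ->
  c (p k1.+1) = c (p k2) -> c (p k1) = c (p k2.+1) -> False.
Proof.
move=> w1 w2 h1 h2.
have no_cancel m b : m.+1 < L -> nth x0 w m = (a, b) -> nth x0 w m.+1 = (a, ~~ b) -> False.
  move=> hm wm wm1; have := reduced_nth x0 w_reduced hm.
  by rewrite wm wm1 /cancels eqxx /=; case: (b).
have [e1 | [//] | [k1L k20]] := coset_suffix_wrap (ltn_ord k1) (ltnW (ltn_ord k2)) h1.
  by apply: (no_cancel k1 true); rewrite ?e1.
have [e2 | [k10 _] | [_ //]] := coset_suffix_wrap (ltnW (ltn_ord k1)) (ltn_ord k2) h2.
  by apply: (no_cancel k2 false); rewrite -?e2.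
by move: w1; rewrite k10 -k20 w2.
Qed.

Let loop_edge (k : 'I_L) := (c (p (k + (nth x0 w k).2)), (nth x0 w k).1).

Lemma loop_edge_inj : injective loop_edge.
Proof.
move=> k1 k2; rewrite /loop_edge.
case w1: (nth x0 w k1) => [a b1]; case w2: (nth x0 w k2) => [a2 b2] /= [h a12].
subst a2.
have h' : c (p (k1 + ~~ b1)) = c (p (k2 + ~~ b2)).
  rewrite -(loop_step (ltn_ord k1) w1) -(loop_step (ltn_ord k2) w2).
  exact: classifies_mull hc h.
move: w1 w2 h h'; case: b1; case: b2 => w1 w2 /=; rewrite ?addn0 ?addn1 => h h'.
- by apply: val_inj; case: (coset_suffix_wrap (ltn_ord k1) (ltn_ord k2) h) => [[] | [] | []].
- by case: (loop_no_reversal w1 w2 h h').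
- by case: (loop_no_reversal w2 w1 (esym h) (esym h')).
- exact: val_inj (coset_suffix_inj (ltn_ord k1) (ltn_ord k2) h).
Qed.

Lemma loop_partial_transversal : exists R t E, partial_transversal G c g R t E.
Proof.
have L0 : 0 < L by rewrite lt0n size_eq0.
pose R := [set c (p k) | k : 'I_L].
pose t i := if [pick k : 'I_L | c (p k) == i] is Some k then p k else e.
have pR k : k <= L -> c (p k) \in R.
  rewrite leq_eqVlt => /predU1P [-> | hk]; last by apply/imsetP; exists (Ordinal hk).
  by rewrite suffix_size -suffix0; apply/imsetP; exists (Ordinal L0).
have tp k : k <= L -> t (c (p k)) = p k.
  have tp' k' : k' < L -> t (c (p k')) = p k'.
    move=> hk; rewrite /t; case: pickP => [k'' /eqP /coset_suffix_inj -> // | none].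
    by have := none (Ordinal hk); rewrite eqxx.
  by rewrite leq_eqVlt => /predU1P [-> | /tp' //]; rewrite suffix_size -suffix0 tp'.
exists R, t, [set loop_edge k | k : 'I_L]; split.
- by move=> _ /imsetP [k _ ->]; rewrite tp // ltnW.
- by rewrite -suffix0 pR.
- by rewrite -suffix0 tp.
- move=> _ /imsetP [k _ ->]; rewrite /loop_edge.
  case wk: (nth x0 w k) => [a b] /=.
  have kb (b' : bool) : k + b' <= L by have := ltn_ord k; case: b' => /=; lia.
  by rewrite tp // (loop_step (ltn_ord k) wk); split; [exact: pR | exact: pR | exact: tp].
- by rewrite (card_imset _ loop_edge_inj) leq_imset_card.
Qed.

End Loop.

Lemma schreier_rank_bound K n (c : T -> 'I_n) R t E :
  is_subgroup G K -> classifies G K c -> (forall i, exists x, c x = i) ->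
  partial_transversal G c g R t E ->
  exists m (s : 'I_m -> T), generates G K s /\ m + n <= n * d.
Proof.
move=> sK hc c_surj tr.
have [t' [E' [ct _ root_rep edges count]]] := full_transversal hc g_spans c_surj tr.
have ct' i : c (t' i) = i := ct i (in_setT i).
have triv q : q \in E' -> schreier_gen G c g t' q = e.
  by move=> /edges [_ _ tq]; rewrite /schreier_gen tq gmulV.
have gens := generates_drop_trivial (schreier_genK hc g ct')
  (fun x => schreier_generation hc g_spans ct' root_rep sK) triv.
exists #|~: E'|, (fun j => schreier_gen G c g t' (enum_val j)); split=> //.
have := cardsC E'; rewrite card_prod !card_ord.
by move: count; rewrite cardsT card_ord; lia.
Qed.

Section NoRelator.
Hypothesis rf : residually_finite G.
Hypothesis rank_mult : forall K n r,
  is_subgroup G K -> has_index G (fun _ => True) K n -> is_rank G K r ->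
  (r%:Z - 1 = n%:Z * (d%:Z - 1))%R.

Lemma relator_suffixes_collide (w : seq (letter d)) :
  w != [::] -> reduced w -> weval G g w = e ->
  exists j k, [/\ j < k, k < size w & weval G g (drop j w) = weval G g (drop k w)].
Proof.
case: w => [//|x0 w'] w_nil; set w := x0 :: w' in w_nil * => w_red w_rel.
apply: NNPP => distinct; pose p k := weval G g (drop k w).
have p_nt (jk : 'I_(size w) * 'I_(size w)) : jk.1 < jk.2 -> (p jk.1)^-1 ** p jk.2 <> e.
  case: jk => j k /= jk pjk; apply: distinct; exists j, k; split=> //.
  by rewrite -[RHS](gmulKVg G (p j)) pjk gmulg1.
have [K [sK [n hn] avoid]] := residually_finite_avoid
  (P := fun jk : 'I_(size w) * 'I_(size w) => jk.1 < jk.2) rf p_nt.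
have [c [hc c_surj]] := finite_index_classifier sK hn.
have sep j k : j < k < size w -> c (p j) <> c (p k).
  by case/andP=> jk kw /hc; apply: (avoid (Ordinal (ltn_trans jk kw), Ordinal kw)).
have [R [t [E tr]]] := loop_partial_transversal hc x0 w_nil w_red w_rel sep.
have [m [s [gen_s mn]]] := schreier_rank_bound sK hc c_surj tr.
have [r rK rm] := is_rank_exists gen_s.
by have := rank_mult sK hn rK; lia.
Qed.

Lemma no_reduced_relator (w : seq (letter d)) :
  w != [::] -> reduced w -> weval G g w <> e.
Proof.
have [N] := ubnP (size w); elim: N w => // N IH w.
rewrite ltnS => wN w_nil w_red w_rel.
have [j [k [jk kw pjk]]] := relator_suffixes_collide w_nil w_red w_rel.
have size_u : size (take (k - j) (drop j w)) = k - j.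
  by rewrite size_takel // size_drop leq_sub2r // ltnW.
apply: (IH (take (k - j) (drop j w))).
- by rewrite size_u; lia.
- by rewrite -size_eq0 size_u; lia.
- exact: reduced_take (reduced_drop j w_red).
- by apply: weval_infix_one pjk; rewrite (ltnW jk) ltnW.
Qed.

End NoRelator.

Section Free.
Hypothesis no_relator :
  forall w : seq (letter d), w != [::] -> reduced w -> weval G g w <> e.

Lemma weval_relator_transfer U (H : group_struct U) h w :
  weval G g w = e -> weval H h w = gone H.
Proof.
have [N] := ubnP (size w); elim: N w => // N IH w; rewrite ltnS => wN w_rel.
have [w_red | /not_reduced_cancels [u [x [y [v [wE xy]]]]]] := boolP (reduced w).
  by have [-> // | w_nil] := eqVneq w [::]; case: (no_relator w_nil w_red w_rel).
rewrite wE weval_reduce //; apply: IH; first by move: wN; rewrite wE !size_cat /=; lia.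
by rewrite -(weval_reduce G g u v xy) -wE.
Qed.

Lemma weval_surj x : exists w, weval G g w = x.
Proof.
refine (@g_spans x (fun x => exists w : seq (letter d), weval G g w = x) _ _).
- split; [by exists [::] | split].
  + by move=> _ _ [u <-] [v <-]; exists (u ++ v); rewrite weval_cat.
  + by move=> _ [u <-]; exists (winv u); rewrite weval_winv.
- by move=> _ [i ->]; exists [:: (i, true)]; rewrite /= gmulg1.
Qed.

Lemma free_of_no_relator : is_free G.
Proof.
exists (fun x => exists i, x = g i) => U H f.
pose h i := f (g i).
pose word x := epsilon (inhabits [::]) (fun w => weval G g w = x).
have wordK x : weval G g (word x) = x.
  exact: (epsilon_spec (inhabits [::]) (fun w => weval G g w = x) (weval_surj x)).
have weval_congr u v : weval G g u = weval G g v -> weval H h u = weval H h v.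
  move=> uv; have : weval H h (u ++ winv v) = gone H.
    by apply: weval_relator_transfer; rewrite weval_cat weval_winv uv gmulgV.
  by rewrite weval_cat weval_winv => uvH; rewrite (ginv_uniq uvH) ginvK.
exists (fun x => weval H h (word x)); split; [|split].
- by move=> x y; rewrite -weval_cat; apply: weval_congr; rewrite weval_cat !wordK.
- move=> _ [i ->]; rewrite (weval_congr _ [:: (i, true)]) /=; first exact: gmulg1.
  by rewrite wordK /= gmulg1.
- move=> psi psi_hom psi_g y.
  by rewrite -{1}(wordK y) (weval_hom psi_hom (h := h)) // => i; apply: psi_g; exists i.
Qed.

End Free.
End Relators.

Theorem theorem1 (T : Type) (G : group_struct T) :
  fin_generated G -> residually_finite G ->
  (forall (G1 G2 : T -> Prop), is_subgroup G G1 -> is_subgroup G G2 ->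
     prop_subset G2 G1 -> finite_index G G2 ->
     forall (n r1 r2 : nat), has_index G G1 G2 n ->
       is_rank G G1 r1 -> is_rank G G2 r2 ->
       ((r2%:Z - 1) = n%:Z * (r1%:Z - 1))%R) ->
  is_free G.
Proof.
move=> [k [g0 gen_g0]] rf rank_mult.
have [d rkG _] := is_rank_exists gen_g0; have [[g [_ g_spans]] _] := rkG.
have sT : is_subgroup G (fun _ => True) by [].
apply: (free_of_no_relator (fun x => g_spans x I)).
apply: (no_reduced_relator (fun x => g_spans x I) rf) => K n r sK hn rK.
exact: rank_mult sT sK (fun _ _ => I) (ex_intro _ n hn) n d r hn rkG rK.
Qed.
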